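(* For every agent $i$, atomic terms $t,s,u$, $\theta\in\Theta_K=[0,1]\cap\mathbb{Q}$ and $\eta\in\Theta_V^+=(\tfrac12,1]\cap\mathbb{Q}$, the following formulas are valid (true at every world of every model): \[ K_i^1(t=s)\to\bigl(K_i^\theta(t=u)\leftrightarrow K_i^\theta(s=u)\bigr),\qquad K_i^1(t=s)\to\bigl(Kv_i^\eta(t)\leftrightarrow Kv_i^\eta(s)\bigr). \]
   Context: Fix a countable set $\mathsf{Prop}$ of propositional variables, a countable set $\mathsf{Term}$ of atomic terms, and a finite set of agents $\mathcal{A}=\{1,\dots,n\}$. Let $\Theta_K=[0,1]\cap\mathbb{Q}$ and $\Theta_V^+=(\frac12,1]\cap\mathbb{Q}$. Formulas are generated by $\varphi::= p\mid t=s\mid\neg\varphi\mid(\varphi\to\psi)\mid K_i^\theta\varphi\mid Kv_i^\eta(t)$ with $p\in\mathsf{Prop}$, $t,s\in\mathsf{Term}$, $i\in\mathcal{A}$, $\theta\in\Theta_K$, $\eta\in\Theta_V^+$; $\leftrightarrow$ is a standard abbreviation. A model is $M=(W,D,\{P_i\}_{i\in\mathcal{A}},V,\mathsf{val})$ with $W\neq\emptyset$, $D\neq\emptyset$, $P_i(w)$ a countably additive probability measure on the powerset of $W$ for each $i,w$, $V:W\times\mathsf{Prop}\to\{0,1\}$, $\mathsf{val}:W\times\mathsf{Term}\to D$. Write $\llbracket\varphi\rrbracket^M=\{u\mid M,u\models\varphi\}$ and $\llbracket t=d\rrbracket^M=\{u\mid \mathsf{val}(u,t)=d\}$. Satisfaction: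 $M,w\models p$ iff $V(w,p)=1$; $M,w\models t=s$ iff $\mathsf{val}(w,t)=\mathsf{val}(w,s)$; Boolean clauses as usual; $M,w\models K_i^\theta\varphi$ iff $P_i(w)(\llbracket\varphi\rrbracket^M)\ge\theta$; $M,w\models Kv_i^\eta(t)$ iff there exists a unique $d\in D$ with $P_i(w)(\llbracket t=d\rrbracket^M)\ge\eta$. *)

From Stdlib Require Import Reals QArith Qreals.
Open Scope R_scope.

Definition agent (n : nat) : Type := {i : nat | (1 <= i <= n)%nat}.

Definition prop_var : Type := nat.
Definition term : Type := nat.

Definition ThetaK : Type := {q : Q | (0 <= q <= 1)%Q}.
Definition ThetaVplus : Type := {q : Q | (1 # 2 < q)%Q /\ (q <= 1)%Q}.

Definition thK (q : ThetaK) : R := Q2R (proj1_sig q).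
Definition thV (q : ThetaVplus) : R := Q2R (proj1_sig q).

Inductive form (n : nat) : Type :=
| FProp : prop_var -> form n
| FEq : term -> term -> form n
| FNeg : form n -> form n
| FImp : form n -> form n -> form n
| FK : agent n -> ThetaK -> form n -> form n
| FKv : agent n -> ThetaVplus -> term -> form n.

Arguments FProp {n}. Arguments FEq {n}. Arguments FNeg {n}.
Arguments FImp {n}. Arguments FK {n}. Arguments FKv {n}.

Definition FAnd {n} (a b : form n) : form n := FNeg (FImp a (FNeg b)).
Definition FIff {n} (a b : form n) : form n := FAnd (FImp a b) (FImp b a).

Record is_probability {W : Type} (mu : (W -> Prop) -> R) : Prop := {
  prob_nonneg : forall A, 0 <= mu A;
  prob_total : mu (fun _ => True) = 1;
  prob_sigma_additive : forall A : nat -> W -> Prop,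
    (forall m k, m <> k -> forall x, A m x -> A k x -> False) ->
    infinite_sum (fun k => mu (A k)) (mu (fun x => exists k, A k x))
}.

Record model (n : nat) : Type := {
  W : Type;
  W_nonempty : inhabited W;
  D : Type;
  D_nonempty : inhabited D;
  P : agent n -> W -> (W -> Prop) -> R;
  P_prob : forall i w, is_probability (P i w);
  V : W -> prop_var -> bool;
  val : W -> term -> D
}.

Arguments W {n}. Arguments D {n}. Arguments P {n}. Arguments V {n}. Arguments val {n}.

Fixpoint sat {n} (M : model n) (w : W M) (phi : form n) : Prop :=
  match phi with
  | FProp p => V M w p = true
  | FEq t s => val M w t = val M w s
  | FNeg a => ~ sat M w a
  | FImp a b => sat M w a -> sat M w b
  | FK i th a => P M i w (fun u => sat M u a) >= thK th
  | FKv i eta t => exists! d : D M, P M i w (fun u => val M u t = d) >= thV eta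
  end.

Definition valid {n} (phi : form n) : Prop :=
  forall (M : model n) (w : W M), sat M w phi.

Lemma one_in_ThetaK : (0 <= 1 <= 1)%Q.
Proof. split; discriminate. Qed.
Definition theta_one : ThetaK := exist _ 1%Q one_in_ThetaK.

(* A probability measure giving measure 1 to an event [A] cannot tell apart
   two events that agree on [A]: their differences lie in the complement of
   [A], which is null.  If [i] is certain of [t = s], the events "[t] equals
   [u]" and "[s] equals [u]" (and likewise "[t] has value [d]" and "[s] has
   value [d]") agree on such an [A], so they receive the same probability,
   which settles both the [K] and the [Kv] equivalences. *)
From Stdlib Require Import Reals QArith Qreals.
From Stdlib Require Import Lra Lia FunctionalExtensionality PropExtensionality.
Open Scope R_scope.

Section Probability.

Variable Wt : Type.
Variable mu : (Wt -> Prop) -> R.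
Hypothesis mu_prob : is_probability mu.

Lemma prob_ext (A B : Wt -> Prop) : (forall x, A x <-> B x) -> mu A = mu B.
Proof.
  intro AB. f_equal. apply functional_extensionality; intro x.
  apply propositional_extensionality, AB.
Qed.

Lemma prob_empty : mu (fun _ => False) = 0.
Proof.
  set (c := mu (fun _ => False)).
  assert (sum_c : infinite_sum (fun _ => c) c).
  { pose proof (prob_sigma_additive _ mu_prob (fun _ _ => False)) as H.
    rewrite (prob_ext _ (fun _ => False)) in H by (intro; firstorder).
    apply H; tauto. }
  destruct (Rle_lt_or_eq_dec 0 c (prob_nonneg _ mu_prob _)) as [c_pos | c_zero];
    [exfalso | auto].
  (* Consecutive partial sums differ by [c], so they cannot both be [c/2]-close to [c]. *)
  destruct (sum_c (c / 2)) as [N close]; [lra |].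
  pose proof (close N (le_n _)) as close_N.
  pose proof (close (S N) (le_S _ _ (le_n _))) as close_SN.
  unfold R_dist in *; simpl sum_f_R0 in close_SN.
  apply Rabs_def2 in close_N; apply Rabs_def2 in close_SN; lra.
Qed.

Lemma prob_disjoint_union (A B : Wt -> Prop) :
  (forall x, A x -> B x -> False) -> mu (fun x => A x \/ B x) = mu A + mu B.
Proof.
  intro disjAB.
  set (F := fun k : nat => match k with O => A | 1%nat => B | _ => fun _ => False end).
  assert (disjF : forall m k, m <> k -> forall x, F m x -> F k x -> False).
  { intros [|[|m]] [|[|k]] mk x; simpl; try tauto; eauto; lia. }
  pose proof (prob_sigma_additive _ mu_prob F disjF) as sumF.
  rewrite (prob_ext _ (fun x => A x \/ B x)) in sumF.
  2: { intro x; split.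
       - intros [[|[|k]] Fk]; simpl in Fk; tauto.
       - intros [Ax | Bx]; [exists 0%nat | exists 1%nat]; assumption. }
  assert (partial : forall N, sum_f_R0 (fun k => mu (F k)) (S N) = mu A + mu B).
  { induction N as [|N IH]; [reflexivity |].
    simpl sum_f_R0 in *; rewrite IH; simpl; rewrite prob_empty; ring. }
  apply (UL_sequence _ _ _ sumF).
  intros e e_pos; exists 1%nat; intros [|N] N_ge; [lia |].
  rewrite partial; unfold R_dist; rewrite Rminus_diag, Rabs_R0; exact e_pos.
Qed.

Lemma prob_split (A X : Wt -> Prop) :
  mu X = mu (fun x => X x /\ A x) + mu (fun x => X x /\ ~ A x).
Proof.
  rewrite <- prob_disjoint_union by tauto.
  apply prob_ext; intro x; tauto.
Qed.

Lemma prob_compl (A : Wt -> Prop) : mu (fun x => ~ A x) = 1 - mu A.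
Proof.
  rewrite <- (prob_total _ mu_prob), (prob_split A (fun _ => True)).
  rewrite (prob_ext (fun x => True /\ A x) A) by tauto.
  rewrite (prob_ext (fun x => True /\ ~ A x) (fun x => ~ A x)) by tauto.
  ring.
Qed.

Lemma prob_restrict_sure (A X : Wt -> Prop) :
  mu A >= 1 -> mu X = mu (fun x => X x /\ A x).
Proof.
  intro A_sure.
  assert (outside : mu (fun x => X x /\ ~ A x) <= 0).
  { pose proof (prob_split X (fun x => ~ A x)) as split_compl.
    rewrite prob_compl in split_compl.
    rewrite (prob_ext (fun x => ~ A x /\ X x) (fun x => X x /\ ~ A x)) in split_compl
      by tauto.
    pose proof (prob_nonneg _ mu_prob (fun x => ~ A x /\ ~ X x)). lra. }
  pose proof (prob_nonneg _ mu_prob (fun x => X x /\ ~ A x)).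
  rewrite (prob_split A X). lra.
Qed.

Lemma prob_eq_on_sure (A B C : Wt -> Prop) :
  mu A >= 1 -> (forall x, A x -> (B x <-> C x)) -> mu B = mu C.
Proof.
  intros A_sure BC.
  rewrite (prob_restrict_sure A B), (prob_restrict_sure A C) by exact A_sure.
  apply prob_ext; intro x; split; intros [? Ax]; split; auto; apply (BC x Ax); auto.
Qed.

End Probability.

Lemma unique_ex_iff {T : Type} (Q R : T -> Prop) :
  (forall d, Q d <-> R d) -> (exists! d, Q d) <-> (exists! d, R d).
Proof. intro QR; split; intros [d [Qd uniq]]; exists d; firstorder. Qed.

Lemma thK_theta_one : thK theta_one = 1.
Proof. unfold thK, theta_one, Q2R; simpl; field. Qed.

Lemma sat_FIff {n} (M : model n) w (a b : form n) :
  sat M w (FIff a b) <-> (sat M w a <-> sat M w b).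
Proof. simpl; tauto. Qed.

Lemma prob_val_eq_subst {n} (M : model n) i w (t s : term) (f : W M -> D M) :
  sat M w (FK i theta_one (FEq t s)) ->
  P M i w (fun x => val M x t = f x) = P M i w (fun x => val M x s = f x).
Proof.
  simpl; rewrite thK_theta_one; intro sure.
  apply (prob_eq_on_sure _ _ (P_prob _ M i w) _ _ _ sure).
  intros x ts; rewrite ts; tauto.
Qed.

Theorem proposition7 (n : nat) (i : agent n) (t s u : term)
  (theta : ThetaK) (eta : ThetaVplus) :
  valid (FImp (FK i theta_one (FEq t s))
              (FIff (FK i theta (FEq t u)) (FK i theta (FEq s u))))
  /\
  valid (FImp (FK i theta_one (FEq t s))
              (FIff (FKv i eta t) (FKv i eta s))).
Proof.
  split; intros M w sure; apply sat_FIff; simpl.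
  - rewrite (prob_val_eq_subst M i w t s (fun x => val M x u) sure); tauto.
  - apply unique_ex_iff; intro d.
    rewrite (prob_val_eq_subst M i w t s (fun _ => d) sure); tauto.
Qed.
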